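(* Let $V\subset\mathbb{R}^n$ be a singular irreducible central real algebraic variety. Then the ring $\mathcal{R}^0(V)$ of continuous rational functions on $V$ has the weak substitution property on points over $\mathbb{R}[V]$: every ring homomorphism $\mathbb{R}[V]\to\mathbb{R}$ admits one and only one extension to a ring homomorphism $\mathcal{R}^0(V)\to\mathbb{R}$.
   Context: $V$ is central if its non-singular points are dense in $V$ for the Euclidean topology. $\mathcal{R}^0(V)$ consists of the continuous functions $V\to\mathbb{R}$ whose restriction to some non-empty Zariski open subset of $V$ is regular. *)

From mathcomp Require Import all_boot all_algebra.
From mathcomp Require Import Rstruct.
From mathcomp Require Import mpoly.
Set Implicit Arguments. Unset Strict Implicit. Unset Printing Implicit Defensive.
Import GRing.Theory Num.Theory.
Local Open Scope ring_scope.

Notation RR := Rdefinitions.R.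

Definition point (n : nat) := 'I_n -> RR.
Definition rset (n : nat) := point n -> Prop.

Definition sqdist n (x y : point n) : RR := \sum_(i < n) (x i - y i) ^+ 2.

Definition is_algebraic n (V : rset n) : Prop :=
  exists s : seq {mpoly RR[n]}, forall x, V x <-> (forall p, p \in s -> p.@[x] = 0).

Definition vanishing_ideal n (V : rset n) : {mpoly RR[n]} -> Prop :=
  fun p => forall x, V x -> p.@[x] = 0.

Definition is_irreducible n (V : rset n) : Prop :=
  is_algebraic V /\ (exists x, V x) /\
  forall W1 W2 : rset n, is_algebraic W1 -> is_algebraic W2 ->
    (forall x, V x <-> (W1 x \/ W2 x)) ->
    (forall x, V x <-> W1 x) \/ (forall x, V x <-> W2 x).

Definition is_ideal n (P : {mpoly RR[n]} -> Prop) : Prop :=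
  P 0 /\ (forall p q, P p -> P q -> P (p + q)) /\ (forall p q, P q -> P (p * q)).
Definition is_prime_ideal n (P : {mpoly RR[n]} -> Prop) : Prop :=
  is_ideal P /\ ~ P 1 /\ (forall p q, P (p * q) -> P p \/ P q).

(* dimension of V = Krull dimension of R[V] = R[X]/I(V): chains of prime ideals
   P_0 < P_1 < ... < P_d of R[X] containing I(V) *)
Definition prime_chain n (V : rset n) (d : nat) (C : nat -> {mpoly RR[n]} -> Prop) :=
  (forall i, (i <= d)%N -> is_prime_ideal (C i) /\ (forall p, vanishing_ideal V p -> C i p)) /\
  (forall i, (i < d)%N -> (forall p, C i p -> C i.+1 p) /\ exists p, C i.+1 p /\ ~ C i p).
Definition alg_dim n (V : rset n) (d : nat) : Prop :=
  (exists C, prime_chain V d C) /\ (forall d' C, prime_chain V d' C -> (d' <= d)%N).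

Definition generates n (s : seq {mpoly RR[n]}) (I : {mpoly RR[n]} -> Prop) : Prop :=
  (forall p, p \in s -> I p) /\
  (forall p, I p -> exists g : seq {mpoly RR[n]},
      p = \sum_(i < size s) g`_i * s`_i).

Definition jacobian n (s : seq {mpoly RR[n]}) (x : point n) : 'M[RR]_(size s, n) :=
  \matrix_(i < size s, j < n) (mderiv j s`_i).@[x].

(* non-singular point (BCR Def. 3.3.9): x in V, I(V) generated by f_1..f_s,
   rank of the Jacobian at x equals n - dim V *)
Definition nonsingular_point n (V : rset n) (x : point n) : Prop :=
  V x /\ exists d, alg_dim V d /\
    exists s, generates s (vanishing_ideal V) /\ \rank (jacobian s x) = (n - d)%N.

Definition is_singular n (V : rset n) : Prop :=
  exists x, V x /\ ~ nonsingular_point V x.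

Definition is_central n (V : rset n) : Prop :=
  forall x, V x -> forall eps : RR, 0 < eps ->
    exists y, nonsingular_point V y /\ sqdist x y < eps.

Definition pts n (V : rset n) := {x : point n | V x}.

(* R[V]: polynomial functions on V (≅ R[X]/I(V)) *)
Definition is_polyfun n (V : rset n) (f : pts V -> RR) : Prop :=
  exists p : {mpoly RR[n]}, forall x : pts V, f x = p.@[sval x].

Definition continuous_on_V n (V : rset n) (f : pts V -> RR) : Prop :=
  forall (x : pts V) (eps : RR), 0 < eps -> exists delta : RR, 0 < delta /\
    forall y : pts V, sqdist (sval x) (sval y) < delta -> `|f y - f x| < eps.

(* R^0(V): continuous functions on V whose restriction to some nonempty
   Zariski open subset U = V \ W (W algebraic) of V is regular (= p/q, q nonvanishing on U) *)
Definition is_R0 n (V : rset n) (f : pts V -> RR) : Prop :=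
  continuous_on_V f /\
  exists W : rset n, is_algebraic W /\ (exists x : pts V, ~ W (sval x)) /\
    exists p q : {mpoly RR[n]}, forall x : pts V, ~ W (sval x) ->
      q.@[sval x] != 0 /\ f x = p.@[sval x] / q.@[sval x].

Definition ring_hom_on n (V : rset n) (S : (pts V -> RR) -> Prop)
    (phi : (pts V -> RR) -> RR) : Prop :=
  (forall f g, S f -> S g -> phi (fun x => f x + g x) = phi f + phi g) /\
  (forall f g, S f -> S g -> phi (fun x => f x * g x) = phi f * phi g) /\
  phi (fun _ => 1) = 1.

From mathcomp Require Import all_boot all_algebra.
From mathcomp Require Import Rstruct.
From mathcomp Require Import mpoly.
From mathcomp Require Import all_order ring lra.
From Stdlib Require Import FunctionalExtensionality ProofIrrelevance.
Import Order.TTheory GRing.Theory Num.Theory.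
Set Implicit Arguments. Unset Strict Implicit. Unset Printing Implicit Defensive.
Local Open Scope ring_scope.

(* A ring homomorphism phi : R[V] -> R fixes the constants (the identity is the
   only ring endomorphism of R), hence is evaluation at the point
   a = (phi x_1, ..., phi x_n), which lies on V since the equations of V vanish
   at it; evaluation at a extends phi to R^0(V).  Conversely, let psi extend phi
   and let f in R^0(V) satisfy psi f <> f a.  Then g = f - psi f has psi g = 0
   and g a <> 0, so u = g^2 + |x - a|^2 vanishes nowhere on V.  Its inverse is
   continuous and regular off the same Zariski closed set as f, so it lies in
   R^0(V) and psi u <> 0; yet psi u = (psi g)^2 + phi |x - a|^2 = 0. *)

Section RealRingEndo.
Variable s : RR -> RR.
Hypotheses (sD : forall x y, s (x + y) = s x + s y)
           (sM : forall x y, s (x * y) = s x * s y) (s1 : s 1 = 1).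

Lemma ring_endo_RR0 : s 0 = 0.
Proof. by have := sD 0 0; rewrite addr0 => h; lra. Qed.

Lemma ring_endo_RRB x y : s (x - y) = s x - s y.
Proof.
have sN z : s (- z) = - s z.
  by have := sD z (- z); rewrite subrr ring_endo_RR0 => h; lra.
by rewrite sD sN.
Qed.

Lemma ring_endo_RR_nat (m : nat) : s m%:R = m%:R.
Proof. by elim: m => [|m IH]; rewrite ?ring_endo_RR0 // -addn1 natrD sD IH s1. Qed.

Lemma ring_endo_RR_int (k : int) : s k%:~R = k%:~R.
Proof.
case: k => m; first exact: ring_endo_RR_nat.
by rewrite NegzE !mulrNz -sub0r ring_endo_RRB ring_endo_RR0 ring_endo_RR_nat sub0r.
Qed.

Lemma ring_endo_RR_le x y : x <= y -> s x <= s y.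
Proof.
have s_ge0 z : 0 <= z -> 0 <= s z.
  by move=> z0; rewrite -(sqr_sqrtr z0) sM -expr2 sqr_ge0.
by move=> xy; rewrite -subr_ge0 -ring_endo_RRB s_ge0 // subr_ge0.
Qed.

(* With k = floor (m x), both m x and m (s x) lie in [k, k + 1], so
   m |s x - x| <= 1 for every m. *)
Lemma ring_endo_RR_id x : s x = x.
Proof.
apply/eqP/negPn/negP => sx_neq_x.
have d_gt0 : 0 < `|s x - x| by rewrite normr_gt0 subr_eq0.
pose m := Num.bound (2 / `|s x - x|).
have m_large : 2 < m%:R * `|s x - x|.
  by rewrite -ltr_pdivrMr // archi_boundP // divr_ge0 // ltW.
set k := Num.floor (m%:R * x).
have kx := floor_le (m%:R * x); have xk := floorD1_gt (m%:R * x).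
have ksx : k%:~R <= m%:R * s x.
  by rewrite -ring_endo_RR_int -ring_endo_RR_nat -sM ring_endo_RR_le.
have sxk : m%:R * s x <= (k + 1)%:~R.
  by rewrite -ring_endo_RR_int -ring_endo_RR_nat -sM ring_endo_RR_le // ltW.
have : m%:R * `|s x - x| <= 1.
  rewrite -[m%:R]ger0_norm ?ler0n // -normrM mulrBr ler_norml.
  by rewrite intrD -/k in sxk xk *; apply/andP; split; lra.
lra.
Qed.

End RealRingEndo.

Lemma mpoly_subring_ind (R : nzRingType) n (P : {mpoly R[n]} -> Prop) :
  (forall c, P c%:MP) -> (forall i, P 'X_i) ->
  (forall p q, P p -> P q -> P (p + q)) -> (forall p q, P p -> P q -> P (p * q)) ->
  forall p, P p.
Proof.
move=> PC PX PD PM p; rewrite (mpolyE p).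
apply: (big_ind P) => [|//|m _]; first exact: PC.
rewrite -mul_mpolyC mpolyXE_id; apply: (PM) => //.
apply: (big_ind P) => [|//|i _]; first exact: PC.
by elim: (m i) => [|k IH]; rewrite ?expr0 ?exprS; [exact: PC | exact: PM].
Qed.

Lemma sqdist_ge0 n (x y : point n) : 0 <= sqdist x y.
Proof. by apply: sumr_ge0 => i _; apply: sqr_ge0. Qed.

Lemma sqdist_eq0 n (x y : point n) : sqdist x y = 0 <-> x = y.
Proof.
split=> [xy0|->]; last by apply: big1 => i _; rewrite subrr expr0n.
apply: functional_extensionality => i; apply/eqP; rewrite -subr_eq0 -sqrf_eq0.
by apply/eqP; apply: (psumr_eq0P _ xy0) => // j _; apply: sqr_ge0.
Qed.

Definition sqdist_poly n (a : point n) : {mpoly RR[n]} :=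
  \sum_(i < n) ('X_i - (a i)%:MP) ^+ 2.

Lemma meval_sqdist_poly n (a x : point n) : (sqdist_poly a).@[x] = sqdist x a.
Proof.
rewrite /sqdist_poly (big_morph _ (mevalD _) (meval0 _)); apply: eq_bigr => i _.
by rewrite expr2 mevalM mevalB mevalXU mevalC -expr2.
Qed.

Section FunctionsOnV.
Variables (n : nat) (V : rset n).
Implicit Types (f g : pts V -> RR) (p q : {mpoly RR[n]}).

Lemma pts_inj (x y : pts V) : sval x = sval y -> x = y.
Proof. by move=> xy; apply: eq_sig_hprop => // z P Q; apply: proof_irrelevance. Qed.

Definition evalV p : pts V -> RR := fun x => p.@[sval x].

Lemma evalVC c : evalV c%:MP = fun _ => c.
Proof. by apply: functional_extensionality => x; rewrite /evalV mevalC. Qed.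

Lemma evalVX i : evalV 'X_i = fun x => sval x i.
Proof. by apply: functional_extensionality => x; rewrite /evalV mevalXU. Qed.

Lemma evalVD p q : evalV (p + q) = fun x => evalV p x + evalV q x.
Proof. by apply: functional_extensionality => x; rewrite /evalV mevalD. Qed.

Lemma evalVM p q : evalV (p * q) = fun x => evalV p x * evalV q x.
Proof. by apply: functional_extensionality => x; rewrite /evalV mevalM. Qed.

Lemma is_polyfun_evalV p : is_polyfun (evalV p).
Proof. by exists p. Qed.

Lemma is_polyfun_cst c : is_polyfun (V:=V) (fun _ => c).
Proof. by rewrite -evalVC; apply: is_polyfun_evalV. Qed.

Lemma sqr_add_sqdist_neq0 g (a x : pts V) :
  g a != 0 -> g x * g x + sqdist (sval x) (sval a) != 0.
Proof.
have := sqdist_ge0 (sval x) (sval a).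
have [gx0 d_ge0|gx_neq0 d_ge0] := eqVneq (g x) 0.
  rewrite gx0 mul0r add0r; apply: contra => /eqP/sqdist_eq0/pts_inj xa.
  by rewrite -xa gx0.
have : 0 < g x * g x by rewrite -expr2 exprn_even_gt0.
by move=> gg_gt0 _; apply/eqP; lra.
Qed.

Lemma continuous_on_V_cst c : continuous_on_V (V:=V) (fun _ => c).
Proof. by move=> x e e0; exists 1; split=> // y _; rewrite subrr normr0. Qed.

Lemma continuous_on_V_coord i : continuous_on_V (V:=V) (fun x => sval x i).
Proof.
move=> x e e0; exists (e * e); split=> [|y xy]; first by rewrite mulr_gt0.
have : (sval x i - sval y i) ^+ 2 <= sqdist (sval x) (sval y).
  rewrite /sqdist (bigD1 i) //= lerDl; apply: sumr_ge0 => j _; exact: sqr_ge0.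
by rewrite ltr_norml expr2 => h; apply/andP; split; nra.
Qed.

Lemma continuous_on_V_add f g :
  continuous_on_V f -> continuous_on_V g -> continuous_on_V (fun x => f x + g x).
Proof.
move=> cf cg x e e0.
have [d1 [d1_gt0 fd1]] := cf x _ (divr_gt0 e0 (ltr0Sn _ 1)).
have [d2 [d2_gt0 gd2]] := cg x _ (divr_gt0 e0 (ltr0Sn _ 1)).
exists (Num.min d1 d2); split=> [|y]; first by rewrite lt_min d1_gt0 d2_gt0.
rewrite lt_min => /andP[/fd1 fy /gd2 gy].
rewrite (_ : _ - _ = (f y - f x) + (g y - g x)); last by ring.
by apply: le_lt_trans (ler_normD _ _) _; lra.
Qed.

Lemma continuous_on_V_mul f g :
  continuous_on_V f -> continuous_on_V g -> continuous_on_V (fun x => f x * g x).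
Proof.
move=> cf cg x e e0.
set M := `|f x| + `|g x| + 1.
have M_gt0 : 0 < M by rewrite /M; have := normr_ge0 (f x); have := normr_ge0 (g x); lra.
set e' := Num.min 1 (e / (2 * M)).
have e'_gt0 : 0 < e' by rewrite lt_min ltr01 divr_gt0 // mulr_gt0.
have e'_le1 : e' <= 1 by rewrite ge_min lexx.
have e'M : e' * M <= e / 2.
  have : e' <= e / (2 * M) by rewrite ge_min lexx orbT.
  by rewrite ler_pdivlMr ?mulr_gt0 // => h; lra.
have [d1 [d1_gt0 fd1]] := cf x _ e'_gt0.
have [d2 [d2_gt0 gd2]] := cg x _ e'_gt0.
exists (Num.min d1 d2); split=> [|y]; first by rewrite lt_min d1_gt0 d2_gt0.
rewrite lt_min => /andP[/fd1 fy /gd2 gy].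
rewrite (_ : _ - _ = (f y - f x) * g y + f x * (g y - g x)); last by ring.
apply: le_lt_trans (ler_normD _ _) _; rewrite !normrM.
have gy_bound : `|g y| <= `|g x| + 1.
  rewrite -[g y](subrK (g x)) addrC; apply: le_trans (ler_normD _ _) _; lra.
have := normr_ge0 (f y - f x); have := normr_ge0 (g y - g x).
have := normr_ge0 (g y); have := normr_ge0 (f x); have := normr_ge0 (g x).
by rewrite /M in e'M; nra.
Qed.

Lemma continuous_on_V_inv f : continuous_on_V f -> (forall x, f x != 0) ->
  continuous_on_V (fun x => (f x)^-1).
Proof.
move=> cf f_neq0 x e e0.
set c := `|f x|.
have c_gt0 : 0 < c by rewrite normr_gt0.
set e' := Num.min (c / 2) (e * c * c / 2).
have e'_gt0 : 0 < e' by rewrite lt_min !divr_gt0 ?mulr_gt0.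
have e'_le1 : e' <= c / 2 by rewrite ge_min lexx.
have e'_le2 : e' <= e * c * c / 2 by rewrite ge_min lexx orbT.
have [d [d_gt0 fd]] := cf x _ e'_gt0.
exists d; split=> // y /fd fy.
have fy_ge : c / 2 <= `|f y|.
  have := lerB_normD (f x) (f y - f x); rewrite subrKC -/c; lra.
rewrite (_ : (f y)^-1 - (f x)^-1 = (f x - f y) / (f y * f x)); last first.
  by field; rewrite !f_neq0.
rewrite normrM normfV normrM -/c distrC ltr_pdivrMr; last first.
  by rewrite mulr_gt0 // normr_gt0.
by have := normr_ge0 (f y - f x); nra.
Qed.

Lemma continuous_on_V_evalV p : continuous_on_V (evalV p).
Proof.
elim/mpoly_subring_ind: p => [c|i|p q cp cq|p q cp cq].
- by rewrite evalVC; apply: continuous_on_V_cst.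
- by rewrite evalVX; apply: continuous_on_V_coord.
- by rewrite evalVD; apply: continuous_on_V_add.
- by rewrite evalVM; apply: continuous_on_V_mul.
Qed.

(* Working off the single closed set W attached to a given function keeps
   V \ W nonempty without appealing to irreducibility. *)
Definition regular_off (W : rset n) f : Prop :=
  exists p q, forall x : pts V, ~ W (sval x) ->
    q.@[sval x] != 0 /\ f x = p.@[sval x] / q.@[sval x].

Variable W : rset n.

Lemma regular_off_evalV p : regular_off W (evalV p).
Proof. by exists p, 1 => x _; rewrite meval1 divr1 oner_neq0. Qed.

Lemma regular_off_add f g :
  regular_off W f -> regular_off W g -> regular_off W (fun x => f x + g x).
Proof.
move=> [p [q fpq]] [p' [q' gpq]]; exists (p * q' + p' * q), (q * q') => x xW.
have [qx ->] := fpq x xW; have [q'x ->] := gpq x xW.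
rewrite !(mevalD, mevalM) mulf_neq0 //; split=> //; field.
by rewrite qx q'x.
Qed.

Lemma regular_off_mul f g :
  regular_off W f -> regular_off W g -> regular_off W (fun x => f x * g x).
Proof.
move=> [p [q fpq]] [p' [q' gpq]]; exists (p * p'), (q * q') => x xW.
have [qx ->] := fpq x xW; have [q'x ->] := gpq x xW.
rewrite !mevalM mulf_neq0 //; split=> //; field.
by rewrite qx q'x.
Qed.

Lemma regular_off_inv f : regular_off W f -> (forall x, f x != 0) ->
  regular_off W (fun x => (f x)^-1).
Proof.
move=> [p [q fpq]] f_neq0; exists q, p => x xW.
have [qx fx] := fpq x xW.
have px : p.@[sval x] != 0 by apply: contra (f_neq0 x); rewrite fx => /eqP->; rewrite mul0r.
by rewrite fx invf_div.
Qed.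

Lemma is_R0_regular_off f : is_algebraic W -> (exists x : pts V, ~ W (sval x)) ->
  continuous_on_V f -> regular_off W f -> is_R0 f.
Proof. by move=> Walg VW cf regf; split=> //; exists W. Qed.

End FunctionsOnV.

Lemma is_R0_inv n (V : rset n) (f : pts V -> RR) :
  is_R0 f -> (forall x, f x != 0) -> is_R0 (fun x => (f x)^-1).
Proof.
move=> [cf [W [Walg [VW regf]]]] f_neq0.
by apply: (is_R0_regular_off Walg VW); [exact: continuous_on_V_inv | exact: regular_off_inv].
Qed.

Lemma eval_ring_hom_on n (V : rset n) S (a : pts V) : ring_hom_on S (fun f => f a).
Proof. by []. Qed.

Lemma ring_hom_on_unit_neq0 n (V : rset n) S psi (f g : pts V -> RR) :
  ring_hom_on S psi -> S f -> S g -> (forall x, f x * g x = 1) -> psi f != 0.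
Proof.
move=> [_ [psiM psi1]] Sf Sg fg1.
have : psi f * psi g = 1.
  by rewrite -psiM // -psi1; congr psi; apply: functional_extensionality.
by apply: contra_eqN => /eqP->; rewrite mul0r eq_sym oner_neq0.
Qed.

Section PolyfunHom.
Variables (n : nat) (V : rset n) (phi : (pts V -> RR) -> RR).
Hypothesis phi_hom : ring_hom_on (is_polyfun (V:=V)) phi.

Lemma polyfun_hom_cst c : phi (fun _ => c) = c.
Proof.
have [phiD [phiM phi1]] := phi_hom.
apply: (ring_endo_RR_id (s := fun c => phi (fun _ => c))) => // x y.
- exact: phiD (is_polyfun_cst V x) (is_polyfun_cst V y).
- exact: phiM (is_polyfun_cst V x) (is_polyfun_cst V y).
Qed.

Lemma polyfun_hom_evalV p : phi (evalV (V:=V) p) = p.@[fun i => phi (fun x => sval x i)].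
Proof.
have [phiD [phiM _]] := phi_hom.
elim/mpoly_subring_ind: p => [c|i|p q Pp Pq|p q Pp Pq].
- by rewrite evalVC mevalC polyfun_hom_cst.
- by rewrite evalVX mevalXU.
- by rewrite evalVD mevalD -Pp -Pq phiD //; apply: is_polyfun_evalV.
- by rewrite evalVM mevalM -Pp -Pq phiM //; apply: is_polyfun_evalV.
Qed.

Lemma polyfun_hom_is_eval :
  is_algebraic V -> exists a : pts V, forall f, is_polyfun f -> phi f = f a.
Proof.
move=> [s Vs]; pose a i := phi (fun x => sval x i).
have Va : V a.
  apply/Vs => p ps; rewrite -polyfun_hom_evalV -(polyfun_hom_cst 0); congr phi.
  by apply: functional_extensionality => x; apply: (Vs _).1 ps; apply: svalP.
exists (exist _ a Va) => f [p fp].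
by rewrite (functional_extensionality _ _ fp) polyfun_hom_evalV.
Qed.

End PolyfunHom.

Lemma R0_hom_eval n (V : rset n) (a : pts V) psi :
  ring_hom_on (is_R0 (V:=V)) psi -> (forall f, is_polyfun f -> psi f = f a) ->
  forall f, is_R0 f -> psi f = f a.
Proof.
move=> psi_hom psi_a f Rf; have [cf [W [Walg [VW regf]]]] := Rf.
have [psiD [psiM _]] := psi_hom.
have R0 := is_R0_regular_off Walg VW.
have [//|psi_f_neq] := eqVneq (psi f) (f a); exfalso.
pose g x := f x + - psi f.
have cg : continuous_on_V g.
  exact: continuous_on_V_add cf (continuous_on_V_cst (- psi f)).
have rg : regular_off W g.
  by apply: regular_off_add regf _; rewrite -evalVC; apply: regular_off_evalV.
have psi_g : psi g = 0.
  rewrite (psiD f (fun _ => - psi f)) // ?(psi_a (fun _ => - psi f)) ?subrr //.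
    exact: is_polyfun_cst.
  by apply: R0; [exact: continuous_on_V_cst | rewrite -evalVC; apply: regular_off_evalV].
pose h := evalV (V:=V) (sqdist_poly (sval a)).
have Rh : is_R0 h by apply: R0; [exact: continuous_on_V_evalV | exact: regular_off_evalV].
pose u x := g x * g x + h x.
have u_neq0 x : u x != 0.
  rewrite /u /h /evalV meval_sqdist_poly sqr_add_sqdist_neq0 //.
  by rewrite /g subr_eq0 eq_sym.
have cu : continuous_on_V u.
  exact: continuous_on_V_add (continuous_on_V_mul cg cg) (continuous_on_V_evalV _).
have ru : regular_off W u.
  exact: regular_off_add (regular_off_mul rg rg) (regular_off_evalV _ _ _).
have Ru : is_R0 u by exact: R0.
have := ring_hom_on_unit_neq0 psi_hom Ru (is_R0_inv Ru u_neq0) (fun x => mulfV (u_neq0 x)).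
have Rgg : is_R0 (fun x => g x * g x).
  by apply: R0; [exact: continuous_on_V_mul | exact: regular_off_mul].
rewrite (psiD _ h) // psiM ?psi_g ?mul0r ?add0r //; try exact: R0.
rewrite psi_a; last exact: is_polyfun_evalV.
by rewrite /h /evalV /= meval_sqdist_poly (sqdist_eq0 _ _).2 ?eqxx.
Qed.

Theorem proposition4p2 (n : nat) (V : rset n) :
  is_irreducible V -> is_central V -> is_singular V ->
  forall phi : (pts V -> RR) -> RR, ring_hom_on (is_polyfun (V:=V)) phi ->
    (exists psi, ring_hom_on (is_R0 (V:=V)) psi /\
       forall f, is_polyfun f -> psi f = phi f) /\
    (forall psi1 psi2,
       ring_hom_on (is_R0 (V:=V)) psi1 -> (forall f, is_polyfun f -> psi1 f = phi f) ->
       ring_hom_on (is_R0 (V:=V)) psi2 -> (forall f, is_polyfun f -> psi2 f = phi f) ->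
       forall f, is_R0 f -> psi1 f = psi2 f).
Proof.
move=> [Valg _] _ _ phi phi_hom.
have [a phi_a] := polyfun_hom_is_eval phi_hom Valg.
split.
  exists (fun f => f a); split; first exact: eval_ring_hom_on.
  by move=> f /phi_a.
have phi_ext psi : (forall f, is_polyfun f -> psi f = phi f) ->
    forall f, is_polyfun f -> psi f = f a.
  by move=> psi_phi f pf; rewrite psi_phi ?phi_a.
move=> psi1 psi2 psi1_hom /phi_ext psi1_a psi2_hom /phi_ext psi2_a f Rf.
by rewrite (R0_hom_eval psi1_hom psi1_a Rf) (R0_hom_eval psi2_hom psi2_a Rf).
Qed.
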